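(* Let $\mathbb{K}$ be a field, $k\geq 1$, and let $\mathcal{C}\subseteq\mathbb{K}^{2k}$ be a self-dual linear code (so $\dim\mathcal{C}=k$). Then $$\dim_{\mathbb{K}}\big(\mathcal{C}^{(2)}\big)=2k-\mathrm{nb}(\mathcal{C}).$$
   Context: A linear code of length $n$ over $\mathbb{K}$ is a $\mathbb{K}$-subspace $\mathcal{C}\subseteq\mathbb{K}^n$; it is self-dual if $\mathcal{C}=\mathcal{C}^\perp$, where $\mathcal{C}^\perp=\{x\in\mathbb{K}^n:\sum_i x_ic_i=0\ \forall c\in\mathcal{C}\}$. The Schur (componentwise) product of $v,w\in\mathbb{K}^n$ is $v\ast w=(v_1w_1,\dots,v_nw_n)$, and the Schur square $\mathcal{C}^{(2)}$ is the $\mathbb{K}$-span of all $c\ast c'$ with $c,c'\in\mathcal{C}$. Two codes are equivalent if one is obtained from the other by a permutation of coordinates. For codes $\mathcal{C}_1\subseteq\mathbb{K}^{n_1}$, $\mathcal{C}_2\subseteq\mathbb{K}^{n_2}$, the direct sum is $\mathcal{C}_1\oplus\mathcal{C}_2=\{(c_1,c_2):c_i\in\mathcal{C}_i\}\subseteq\mathbb{K}^{n_1+n_2}$. A code is decomposable if it is equivalent to the direct sum of two nontrivial (nonzero, positive-length) codes, and indecomposable otherwise. Every code is equivalent to a direct sum of indecomposable codes (blocks), and the number of blocks is an invariant of the code, denoted $\mathrm{nb}(\mathcal{C})$. *)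

From HB Require Import structures.
From mathcomp Require Import all_boot all_order all_algebra.
Set Implicit Arguments. Unset Strict Implicit. Unset Printing Implicit Defensive.
Import GRing.Theory.
Local Open Scope ring_scope.

Definition code (K : fieldType) (n : nat) := {vspace 'rV[K]_n}.

Definition dotv (K : fieldType) (n : nat) (x y : 'rV[K]_n) : K :=
  \sum_(i < n) x ord0 i * y ord0 i.

Definition self_dual (K : fieldType) (n : nat) (C : code K n) : Prop :=
  forall x : 'rV[K]_n, x \in C <-> (forall c, c \in C -> dotv x c = 0).

Definition schur (K : fieldType) (n : nat) (v w : 'rV[K]_n) : 'rV[K]_n :=
  \row_(i < n) (v ord0 i * w ord0 i).

(* Schur square: span of all products c * c' for c, c' in C
   (spanned by products of basis vectors, by bilinearity). *)
Definition schur_sq (K : fieldType) (n : nat) (C : code K n) : code K n :=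
  <<[seq schur c d | c <- vbasis C, d <- vbasis C]>>%VS.

Definition coord_space (K : fieldType) (n : nat) (S : {set 'I_n}) : code K n :=
  <<[seq (delta_mx (ord0 : 'I_1) i : 'rV[K]_n) | i <- enum S]>>%VS.

(* P is a partition of the coordinates {0..n-1} such that C is (up to the
   corresponding coordinate permutation) the direct sum of the codes
   C restricted to the blocks S in P, each of which is nonzero. *)
Definition block_decomp (K : fieldType) (n : nat) (C : code K n)
    (P : {set {set 'I_n}}) : bool :=
  [&& partition P [set: 'I_n],
      C == (\sum_(S in P) (C :&: coord_space K S))%VS &
      [forall S in P, (C :&: coord_space K S)%VS != 0%VS]].

(* Number of blocks: the maximal number of nonzero blocks in such a
   decomposition, i.e. the number of indecomposable blocks. *)
Definition nb (K : fieldType) (n : nat) (C : code K n) : nat :=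
  \max_(P : {set {set 'I_n}} | block_decomp C P) #|P|.

From HB Require Import structures.
From mathcomp Require Import all_boot all_order all_algebra zify.
Set Implicit Arguments. Unset Strict Implicit. Unset Printing Implicit Defensive.
Import GRing.Theory.
Local Open Scope ring_scope.

(* Let A be the orthogonal of the Schur square C^(2).  As <x * c, d>
   = <x, c * d>, self-duality identifies A with the algebra of the
   x such that x * C <= C; it contains 1 and is closed under the Schur
   product, so it is spanned by the indicators of the classes of the relation
   "x_i = x_j for every x in A", and these classes cut C into nonzero blocks:
   n - dim C^(2) <= dim A <= nb C.  Conversely the indicator of each block of
   any decomposition of C maps C into C, hence is orthogonal to C^(2), and
   picking one coordinate in each block shows that these orthogonality
   relations are independent: nb C + dim C^(2) <= n. *)

Lemma dim_rowv (K : fieldType) (m : nat) : \dim (fullv : {vspace 'rV[K]_m}) = m.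
Proof. by rewrite dimvf /dim /= mul1n. Qed.

Section RowVectors.
Variables (K : fieldType) (n : nat).
Local Notation V := 'rV[K]_n.
Implicit Types (x y v c d : V) (S T : {set 'I_n}) (U W : {vspace V}).

Definition ind S : V := \row_j (j \in S)%:R.
Definition one : V := const_mx 1.

Lemma dimv_disjoint_le U W : (U :&: W = 0)%VS -> (\dim U + \dim W <= n)%N.
Proof.
by move/dimv_disjoint_sum <-; rewrite -[X in (_ <= X)%N](dim_rowv K n) dimvS ?subvf.
Qed.

Lemma scalar_span_eq0 (f : {scalar V}) (X : seq V) v :
  {in X, forall x, f x = 0} -> v \in <<X>>%VS -> f v = 0.
Proof.
move=> fX /(@coord_span _ _ _ (in_tuple X)) ->; rewrite linear_sum big1 // => i _.
by rewrite linearZ_LR /= fX ?mulr0 // mem_nth.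
Qed.

Lemma dotvC x y : dotv x y = dotv y x.
Proof. by apply: eq_bigr => i _; rewrite mulrC. Qed.

Lemma dotv_is_linear x : scalar (dotv x).
Proof.
move=> a u v; rewrite /dotv mulr_sumr -big_split /=; apply: eq_bigr => i _.
by rewrite !mxE mulrDr mulrCA.
Qed.
HB.instance Definition _ x :=
  GRing.isLinear.Build K V K *%R (dotv x) (dotv_is_linear x).

Lemma dotv_delta i x : dotv (delta_mx ord0 i) x = x ord0 i.
Proof.
rewrite /dotv (bigD1 i) //= big1 => [|j ji]; first by rewrite mxE !eqxx mul1r addr0.
by rewrite mxE eqxx (negbTE ji) mul0r.
Qed.

Lemma dotv_ind S x : dotv (ind S) x = \sum_(i in S) x ord0 i.
Proof.
by rewrite [RHS]big_mkcond; apply: eq_bigr => i _; rewrite mxE mulr_natl mulrb.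
Qed.

Lemma schurC x y : schur x y = schur y x.
Proof. by apply/rowP => i; rewrite !mxE mulrC. Qed.

Lemma schurA x y v : schur x (schur y v) = schur (schur x y) v.
Proof. by apply/rowP => i; rewrite !mxE mulrA. Qed.

Lemma schur1v x : schur one x = x.
Proof. by apply/rowP => i; rewrite !mxE mul1r. Qed.

Lemma schur_is_linear x : linear (schur x).
Proof. by move=> a u v; apply/rowP => i; rewrite !mxE mulrDr mulrCA. Qed.
HB.instance Definition _ x :=
  GRing.isLinear.Build K V V *:%R (schur x) (schur_is_linear x).

Lemma dotv_schurA x y v : dotv (schur x y) v = dotv x (schur y v).
Proof. by apply: eq_bigr => i _; rewrite !mxE mulrA. Qed.

Lemma schur_sq_mem (C : code K n) c d :
  c \in C -> d \in C -> schur c d \in schur_sq C.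
Proof.
move=> /coord_vbasis -> /coord_vbasis ->.
rewrite linear_sum; apply: memv_suml => j _; rewrite linearZ /= memvZ //.
rewrite schurC linear_sum; apply: memv_suml => i _; rewrite linearZ /= memvZ //.
by apply/memv_span/allpairs_f; apply: mem_nth; rewrite size_tuple.
Qed.

Lemma coord_spaceP S v :
  reflect (forall i, i \notin S -> v ord0 i = 0) (v \in coord_space K S).
Proof.
apply: (iffP idP) => [vS i iS | v0].
  rewrite -dotv_delta; apply: scalar_span_eq0 vS => _ /mapP [j jS ->] /=.
  rewrite dotv_delta mxE eqxx /=; case: eqP => // ij.
  by rewrite mem_enum -ij (negbTE iS) in jS.
rewrite [v]matrix_sum_delta big_ord1 (bigID (mem S)) /= addrC big1 => [|i /v0 ->].
  rewrite add0r; apply: memv_suml => i iS; rewrite memvZ // memv_span //.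
  by rewrite (map_f (fun i => delta_mx ord0 i)) // mem_enum.
by rewrite scale0r.
Qed.

Lemma schur_ind_coord S c : schur (ind S) c \in coord_space K S.
Proof. by apply/coord_spaceP => i iS; rewrite !mxE (negbTE iS) mul0r. Qed.

Lemma schur_ind_coord_id S v : v \in coord_space K S -> schur (ind S) v = v.
Proof.
move/coord_spaceP=> v0; apply/rowP => i; rewrite !mxE.
by case: (boolP (i \in S)) => [_|/v0 ->]; rewrite ?mul1r ?mulr0.
Qed.

Lemma schur_ind_coord_disjoint S T v :
  [disjoint S & T] -> v \in coord_space K T -> schur (ind S) v = 0.
Proof.
move=> /disjoint_setI0 ST /coord_spaceP v0; apply/rowP => i; rewrite !mxE.
case: (boolP (i \in S)) => iS; rewrite ?mul0r // v0 ?mulr0 //.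
by apply: contraT; rewrite negbK => iT; rewrite -(in_set0 i) -ST inE iS.
Qed.

Lemma dim_coord_space S : \dim (coord_space K S) = #|S|.
Proof.
have dim_le T : (\dim (coord_space K T) <= #|T|)%N.
  by rewrite (leq_trans (dim_span _)) // size_map -cardE.
have full : (fullv <= coord_space K S + coord_space K (~: S))%VS.
  apply/subvP => v _; rewrite -[v](subrK (schur (ind S) v)) addrC.
  rewrite memv_add ?schur_ind_coord //; apply/coord_spaceP => i.
  by rewrite inE negbK => iS; rewrite !mxE iS mul1r subrr.
have := leq_trans (dimvS full) (dimv_add_leqif _ _).
have := dim_le (~: S); have := dim_le S; have := cardsC S.
rewrite dim_rowv card_ord; lia.
Qed.

Lemma sum_ind_partition Q :
  partition Q [set: 'I_n] -> \sum_(S in Q) ind S = one.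
Proof.
case/and3P=> /eqP covQ triQ _; apply/rowP => l; rewrite summxE mxE.
have lQ : l \in cover Q by rewrite covQ inE.
rewrite (bigD1 (pblock Q l)) ?pblock_mem //= big1 => [|S /andP [SQ SnQ]].
  by rewrite mxE mem_pblock lQ addr0.
rewrite mxE; case: (boolP (l \in S)) => // lS.
by rewrite (def_pblock triQ SQ lS) eqxx in SnQ.
Qed.

Lemma sum_schur_ind Q c :
  partition Q [set: 'I_n] -> \sum_(S in Q) schur (ind S) c = c.
Proof.
move=> partQ; under eq_bigr do rewrite schurC.
by rewrite -linear_sum /= sum_ind_partition // schurC schur1v.
Qed.


Definition orthv W : {vspace V} :=
  lker (linfun (mulmxr (\matrix_(j < \dim W) (vbasis W)`_j)^T)).

Lemma orthvP W x : reflect (forall w, w \in W -> dotv x w = 0) (x \in orthv W).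
Proof.
rewrite memv_ker lfunE /=.
have dotE (j : 'I_(\dim W)) :
    (x *m (\matrix_j (vbasis W)`_j)^T) ord0 j = dotv x (vbasis W)`_j.
  by rewrite !mxE; apply: eq_bigr => i _; rewrite !mxE.
apply: (iffP eqP) => [x0 w | xW].
  rewrite -{1}(span_basis (vbasisP W)); apply: scalar_span_eq0 => y /(nthP 0) [j].
  by rewrite size_tuple => jW <- /=; rewrite -[j]/(Ordinal jW : nat) -dotE x0 mxE.
by apply/rowP => j; rewrite dotE mxE xW // vbasis_mem // mem_nth // size_tuple.
Qed.

Lemma dim_orthv W : (n <= \dim (orthv W) + \dim W)%N.
Proof.
rewrite /orthv; set f := linfun _; have := limg_ker_dim f fullv.
have := dimvS (subvf (f @: fullv)); rewrite capfv !dim_rowv => le_fW dim_f.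
by rewrite -[X in (X <= _)%N]dim_f leq_add2l.
Qed.

Lemma partition_orthv_card Q W :
    partition Q [set: 'I_n] -> {in Q, forall S, ind S \in orthv W} ->
  (#|Q| + \dim W <= n)%N.
Proof.
(* On vectors supported by a transversal of Q, the block sums <ind S, v> are
   the coordinates, so such vectors meet W trivially. *)
move=> partQ indQ; have trX := transversalP partQ.
set X := transversal Q [set: 'I_n].
rewrite -(card_transversal trX) -dim_coord_space; apply: dimv_disjoint_le.
apply/eqP; rewrite -subv0; apply/subvP => v /memv_capP [/coord_spaceP vX vW].
rewrite memv0; apply/eqP/rowP => l; rewrite mxE.
have [lX | /vX //] := boolP (l \in X).
have [/eqP covQ triQ _] := and3P partQ.
have BQ : pblock Q l \in Q by rewrite pblock_mem // covQ inE.
have /orthvP/(_ v vW) := indQ _ BQ; rewrite dotv_ind.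
rewrite (bigD1 l) ?mem_pblock ?covQ ?inE //= big1 ?addr0 // => i /andP [iB il].
apply: vX; apply: contra il => iX; apply/eqP/(pblock_inj trX iX lX).
exact: def_pblock.
Qed.

End RowVectors.

Arguments ind {K n} S.
Arguments one {K n}.

Section SchurSubalgebra.
Variables (K : fieldType) (n : nat) (A : {vspace 'rV[K]_n}).
Implicit Types (x y : 'rV[K]_n) (i j l : 'I_n).

Definition agree i j := all (fun x => x ord0 i == x ord0 j) (vbasis A).

Lemma agreeP i j :
  reflect (forall x, x \in A -> x ord0 i = x ord0 j) (agree i j).
Proof.
have diffE x : x ord0 i - x ord0 j = dotv (delta_mx ord0 i - delta_mx ord0 j) x.
  by rewrite dotvC linearB /= !(dotvC x) !dotv_delta.
apply: (iffP allP) => [ij x | ij x /vbasis_mem /ij -> //].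
rewrite -(span_basis (vbasisP A)) => xA; apply/eqP; rewrite -subr_eq0 diffE.
by apply/eqP; apply: scalar_span_eq0 xA => y /ij /eqP /= yij; rewrite -diffE yij subrr.
Qed.

Lemma agree_equiv : equivalence_rel agree.
Proof.
move=> i j l; split; first exact/agreeP.
move=> /agreeP ij; apply/idP/idP => /agreeP jl; apply/agreeP => x xA.
  by rewrite -ij // jl.
by rewrite ij // jl.
Qed.

Definition agree_classes := equivalence_partition agree [set: 'I_n].

Lemma partition_agree_classes : partition agree_classes [set: 'I_n].
Proof. by apply: equivalence_partitionP => i j l _ _ _; apply: agree_equiv. Qed.

Lemma dim_le_agree_classes : (\dim A <= #|agree_classes|)%N.
Proof.
(* Elements of A are constant on classes, so vanishing on a transversal of
   the classes forces them to vanish. *)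
have trX := transversalP partition_agree_classes.
set X := transversal agree_classes [set: 'I_n].
have disjX : (A :&: coord_space K (~: X) = 0)%VS.
  apply/eqP; rewrite -subv0; apply/subvP => v /memv_capP [vA /coord_spaceP vX].
  rewrite memv0; apply/eqP/rowP => l; rewrite mxE.
  have [/eqP covP _ _] := and3P partition_agree_classes.
  have lP : l \in cover agree_classes by rewrite covP inE.
  have lx : agree l (transversal_repr l X (pblock agree_classes l)).
    rewrite -(@pblock_equivalence_partition _ _ [set: 'I_n]) ?inE //.
      by apply: (repr_mem_pblock trX); apply: pblock_mem.
    by move=> i j k _ _ _; apply: agree_equiv.
  rewrite (agreeP _ _ lx) // vX // inE negbK.
  by rewrite (repr_mem_transversal trX) // pblock_mem.
have := dimv_disjoint_le disjX; have := cardsC X.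
rewrite dim_coord_space -(card_transversal trX) card_ord -/X => cardX dimA.
by rewrite -(leq_add2r #|~: X|); apply: leq_trans dimA (eq_leq (esym cardX)).
Qed.

Hypotheses (oneA : one \in A)
  (schur_closed : forall x y, x \in A -> y \in A -> schur x y \in A).

Lemma agree_separate i j :
  ~~ agree i j -> exists2 y, y \in A & y ord0 i = 1 /\ y ord0 j = 0.
Proof.
case/allPn => x /vbasis_mem xA xij.
exists ((x ord0 i - x ord0 j)^-1 *: (x - x ord0 j *: one)).
  by rewrite memvZ // memvB // memvZ.
by rewrite !mxE !mulr1 subrr mulr0 mulVf // subr_eq0.
Qed.

Lemma ind_agree_class_mem i : ind [set j | agree i j] \in A.
Proof.
have [z zA [zi1 zsep]] : exists2 z, z \in A &
    z ord0 i = 1 /\ forall j, ~~ agree i j -> z ord0 j = 0.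
  suff [z zA [zi1 zsep]] : exists2 z, z \in A & z ord0 i = 1 /\
      forall j, j \in enum 'I_n -> ~~ agree i j -> z ord0 j = 0.
    by exists z => //; split=> // j; apply: zsep; rewrite mem_enum.
  elim: (enum 'I_n) => [|j r [z zA [zi1 zsep]]].
    by exists one; rewrite ?mxE.
  have [ij | /agree_separate [y yA [yi1 yj0]]] := boolP (agree i j).
    by exists z => //; split=> // l; rewrite inE => /orP [/eqP -> | /zsep //];
      rewrite ij.
  exists (schur y z); rewrite ?schur_closed //.
  split; first by rewrite mxE yi1 zi1 mulr1.
  by move=> l; rewrite inE mxE => /orP [/eqP -> _ | /zsep /[apply] ->];
    rewrite ?yj0 ?mul0r ?mulr0.
suff -> : ind [set j | agree i j] = z by [].
apply/rowP => l; rewrite mxE inE.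
by have [/agreeP <- // | /zsep ->] := boolP (agree i l).
Qed.

Lemma ind_agree_classes_mem S : S \in agree_classes -> ind S \in A.
Proof.
case/imsetP => i _ ->.
suff -> : [set j in [set: 'I_n] | agree i j] = [set j | agree i j].
  exact: ind_agree_class_mem.
by apply/setP => j; rewrite !inE.
Qed.

End SchurSubalgebra.

Section BlockDecomposition.
Variables (K : fieldType) (n : nat) (C : code K n).
Implicit Types (Q : {set {set 'I_n}}) (S : {set 'I_n}) (c : 'rV[K]_n).

Lemma block_decomp_schur_ind Q S c :
  block_decomp C Q -> S \in Q -> c \in C -> schur (ind S) c \in C.
Proof.
case/and3P=> /and3P [_ triQ _] /eqP defC _ SQ.
rewrite [in X in X -> _]defC => /memv_sumP [cs csC ->].
rewrite linear_sum; apply: memv_suml => T TQ /=.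
have /memv_capP [cTC cTT] := csC T TQ.
have [<- | TS] := eqVneq T S; first by rewrite schur_ind_coord_id.
rewrite (schur_ind_coord_disjoint _ cTT) ?mem0v //.
by apply: (trivIsetP triQ S T SQ TQ); rewrite eq_sym.
Qed.

Lemma block_decomp_stable Q :
    partition Q [set: 'I_n] ->
    {in Q, forall S c, c \in C -> schur (ind S) c \in C} ->
    (forall l, exists2 c, c \in C & c ord0 l != 0) ->
  block_decomp C Q.
Proof.
move=> partQ stabQ suppC; rewrite /block_decomp partQ /=.
have schur_mem S c :
    S \in Q -> c \in C -> schur (ind S) c \in (C :&: coord_space K S)%VS.
  by move=> SQ cC; rewrite memv_cap schur_ind_coord stabQ.
apply/andP; split.
  rewrite eqEsubv; apply/andP; split; last first.
    by apply/subv_sumP => S _; apply: capvSl.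
  apply/subvP => c cC; rewrite -(sum_schur_ind c partQ).
  by apply: memv_sumr => S SQ; apply: schur_mem.
apply/forall_inP => S SQ; have [_ _ S0] := and3P partQ.
have /set0Pn [l lS] : S != set0 by apply: contraTneq SQ => ->.
have [c cC cl] := suppC l; apply: contraNneq cl => CS0.
have := schur_mem S c SQ cC; rewrite CS0 memv0 => /eqP /rowP /(_ l).
by rewrite !mxE lS mul1r => ->.
Qed.

End BlockDecomposition.

Section SelfDual.
Variables (K : fieldType) (n : nat) (C : code K n).
Hypothesis sdC : self_dual C.
Implicit Types (x c d : 'rV[K]_n).

Lemma self_dual_orth c d : c \in C -> d \in C -> dotv c d = 0.
Proof. by move=> /sdC; apply. Qed.

Lemma self_dual_mem x : (forall c, c \in C -> dotv x c = 0) -> x \in C.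
Proof. exact: (proj2 (sdC x)). Qed.

Lemma orthv_schur_sqP x :
  reflect (forall c, c \in C -> schur x c \in C) (x \in orthv (schur_sq C)).
Proof.
apply: (iffP (orthvP _ _)) => [xW c cC | stabx w].
  by apply: self_dual_mem => d dC; rewrite dotv_schurA xW ?schur_sq_mem.
apply: scalar_span_eq0 => _ /allpairsP [[b b'] [/= /vbasis_mem bC bC' ->]].
have b'C := vbasis_mem bC'.
by rewrite -dotv_schurA self_dual_orth ?stabx.
Qed.

Lemma self_dual_support l : exists2 c, c \in C & c ord0 l != 0.
Proof.
have [/hasP [c /vbasis_mem cC cl] | /hasPn C0] :=
  boolP (has (fun c => c ord0 l != 0) (vbasis C)); first by exists c.
suff lC : delta_mx ord0 l \in C.
  by have /eqP := self_dual_orth lC lC; rewrite dotv_delta mxE !eqxx oner_eq0.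
apply: self_dual_mem => c; rewrite -(span_basis (vbasisP C)) dotv_delta => cC.
rewrite -dotv_delta; apply: scalar_span_eq0 cC => y /C0 /negPn /eqP /=.
by rewrite dotv_delta.
Qed.

Let stab := orthv (schur_sq C).

Lemma one_stab : one \in stab.
Proof. by apply/orthv_schur_sqP => c; rewrite schur1v. Qed.

Lemma stab_schur_closed x y : x \in stab -> y \in stab -> schur x y \in stab.
Proof.
move=> /orthv_schur_sqP xC /orthv_schur_sqP yC; apply/orthv_schur_sqP => c cC.
by rewrite -schurA xC ?yC.
Qed.

Lemma dim_stab_le_nb : (\dim stab <= nb C)%N.
Proof.
apply: leq_trans (dim_le_agree_classes stab) _; apply: leq_bigmax_cond.
apply: block_decomp_stable (partition_agree_classes stab) _ self_dual_support.
move=> S /(ind_agree_classes_mem one_stab stab_schur_closed).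
by move/orthv_schur_sqP.
Qed.

Lemma nb_add_dim_schur_sq_le : (nb C + \dim (schur_sq C) <= n)%N.
Proof.
have dimW : (\dim (schur_sq C) <= n)%N.
  by rewrite -[X in (_ <= X)%N](dim_rowv K n) dimvS ?subvf.
rewrite addnC -leq_subRL //; apply/bigmax_leqP => Q decQ.
rewrite leq_subRL // addnC; apply: partition_orthv_card; first by case/and3P: decQ.
by move=> S SQ; apply/orthv_schur_sqP => c; apply: block_decomp_schur_ind decQ SQ.
Qed.

Lemma dim_schur_sq_self_dual : \dim (schur_sq C) = (n - nb C)%N.
Proof.
have nb_dimW := nb_add_dim_schur_sq_le.
have dimW_nb : (n <= nb C + \dim (schur_sq C))%N.
  exact: leq_trans (dim_orthv _) (leq_add dim_stab_le_nb (leqnn _)).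
apply/eqP; rewrite -(eqn_add2l (nb C)) subnKC ?eqn_leq ?nb_dimW //.
exact: leq_trans (leq_addr _ _) nb_dimW.
Qed.

End SelfDual.

Theorem mainTheorem1 (K : fieldType) (k : nat) (C : code K (2 * k)) :
  (1 <= k)%N -> self_dual C ->
  \dim (schur_sq C) = (2 * k - nb C)%N.
Proof.
by move=> _; apply: dim_schur_sq_self_dual.
Qed.
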